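(* For every $n\ge 4$, $\beta(P_\infty\,\Box\, K_n)=n-1$, and $S=\{(0,0),(0,1),\dots,(0,n-2)\}$ is a metric basis of $P_\infty\,\Box\, K_n$.
   Context: $P_\infty$ has vertex set $\mathbb N=\{0,1,2,\dots\}$ with $i,j$ adjacent iff $|i-j|=1$. $K_n$ is the complete graph on vertex set $\{0,1,\dots,n-1\}$. The cartesian product $G\Box H$ has vertex set $V(G)\times V(H)$, where $(a,v)$ is adjacent to $(b,w)$ iff either $a=b$ and $vw\in E(H)$, or $v=w$ and $ab\in E(G)$. A vertex $x$ resolves $u,v$ if $d(u,x)\ne d(v,x)$ (shortest-path distance); a resolving set is a set of vertices resolving every pair of distinct vertices; $\beta$ is the minimum cardinality of a resolving set ($\infty$ if none is finite), and a metric basis is a resolving set of cardinality $\beta$. *)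

From Stdlib Require Import Classical ClassicalEpsilon.
From mathcomp Require Import all_boot.
Set Implicit Arguments. Unset Strict Implicit. Unset Printing Implicit Defensive.

Section Graphs.
Variable V : eqType.
Variable adj : V -> V -> Prop.

Fixpoint walk (k : nat) (u v : V) : Prop :=
  match k with
  | 0 => u = v
  | k'.+1 => exists w, adj u w /\ walk k' w v
  end.

Definition asbool (P : Prop) : bool :=
  if excluded_middle_informative P then true else false.

Lemma asboolP (P : Prop) : reflect P (asbool P).
Proof. rewrite /asbool; case: excluded_middle_informative => H; constructor; done. Qed.

(* shortest-path distance; None encodes infinite distance (no path) *)
Definition dist (u v : V) : option nat :=
  match excluded_middle_informative (exists k, walk k u v) with
  | left H =>
      Some (@ex_minn (fun k => asbool (walk k u v))
              (let: ex_intro k Hk := H in ex_intro _ k (introT (asboolP _) Hk)))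
  | right _ => None
  end.

Definition resolves (x u v : V) : Prop := dist u x <> dist v x.

Definition resolving (S : seq V) : Prop :=
  forall u v : V, u <> v -> exists2 x, x \in S & resolves x u v.

Definition metric_dim_is (k : nat) : Prop :=
  (exists S : seq V, [/\ uniq S, resolving S & size S = k]) /\
  (forall S : seq V, uniq S -> resolving S -> k <= size S).

Definition metric_basis (S : seq V) : Prop :=
  [/\ uniq S, resolving S &
      forall T : seq V, uniq T -> resolving T -> size S <= size T].
End Graphs.

Definition path_inf_adj (i j : nat) : Prop := i.+1 = j \/ j.+1 = i.

Definition complete_adj (n : nat) (v w : 'I_n) : Prop := v <> w.

Definition box_adj (A B : Type) (adjG : A -> A -> Prop) (adjH : B -> B -> Prop)
  (x y : A * B) : Prop :=
  (x.1 = y.1 /\ adjH x.2 y.2) \/ (x.2 = y.2 /\ adjG x.1 y.1).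

Definition PK_adj (n : nat) : nat * 'I_n -> nat * 'I_n -> Prop :=
  box_adj path_inf_adj (@complete_adj n).

Definition basisS (n : nat) : seq (nat * 'I_n) :=
  [seq (0%N, i) | i : 'I_n <- enum 'I_n & (i < n - 1)%N].

From mathcomp Require Import all_boot zify.
From Stdlib Require Import ClassicalEpsilon.

Set Implicit Arguments. Unset Strict Implicit. Unset Printing Implicit Defensive.

(* 1. A general characterisation of the graph distance: if a walk of length d
      joins u and v and every walk is at least that long, then dist u v = d.
   2. In P_inf [] K_n the distance is d((i,a),(j,b)) = |i - j| + [a != b]:
      each edge changes this quantity by at most one, and a walk along the
      column followed by one jump inside a copy of K_n realises it.
   3. Lower bound: a vertex (k,b) sees (0,a) and (0,c) at the same distance
      whenever b differs from both a and c, so a resolving set must meet every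
      column except at most one; hence it has at least n - 1 vertices.
   4. Upper bound: S resolves every pair.  Two vertices of the same row are
      separated by the landmark in the column of one of them; two vertices of
      different rows by a landmark in a third column, which exists as n >= 4.
   The theorem combines 3 and 4 through a general criterion for metric bases. *)

Section GraphDistance.
Variables (V : eqType) (adj : V -> V -> Prop).

Lemma walk_cat k m u w v :
  walk adj k u w -> walk adj m w v -> walk adj (k + m) u v.
Proof.
elim: k u => [|k IH] u /= Huw Hwv; first by subst.
by case: Huw => x [Hux Hxw]; exists x; split => //; apply: IH.
Qed.

Lemma dist_eq u v d :
  walk adj d u v -> (forall k, walk adj k u v -> d <= k) -> dist adj u v = Some d.
Proof.
move=> Hd Hmin; rewrite /dist; case: excluded_middle_informative => H; last first.
  by exfalso; apply: H; exists d.
case: ex_minnP => m /asboolP Hm Hle; congr Some; apply/eqP; rewrite eqn_leq.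
by rewrite Hmin // Hle //; apply/asboolP.
Qed.

Lemma resolves_sym x u v : resolves adj x u v -> resolves adj x v u.
Proof. by move=> H E; apply: H; rewrite E. Qed.

Lemma metric_basis_of_min (S : seq V) (k : nat) :
  uniq S -> resolving adj S -> size S = k ->
  (forall T : seq V, uniq T -> resolving adj T -> k <= size T) ->
  metric_dim_is adj k /\ metric_basis adj S.
Proof.
move=> HuS HrS HsS Hmin; split; split => //; first by exists S.
by move=> T HuT HrT; rewrite HsS; apply: Hmin.
Qed.

End GraphDistance.

Section PathTimesComplete.
Variable n : nat.
Implicit Types (u v w : nat * 'I_n) (a b c : 'I_n).

Definition pk_dist u v : nat := (u.1 - v.1) + (v.1 - u.1) + (u.2 != v.2).

Lemma pk_dist_adj u w v : PK_adj u w -> pk_dist u v <= (pk_dist w v).+1.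
Proof.
case: u w v => [i a] [i' c] [j b].
rewrite /PK_adj /box_adj /pk_dist /path_inf_adj /complete_adj /=.
case=> [[<- _] | [<- Hii']]; first by case: (a != b); case: (c != b); lia.
by case: (a != b); lia.
Qed.

Lemma pk_dist_le_walk k u v : walk (@PK_adj n) k u v -> pk_dist u v <= k.
Proof.
elim: k u => [|k IH] u /=; first by move=> ->; rewrite /pk_dist !subnn eqxx.
by case=> w [Huw Hwv]; apply: leq_trans (pk_dist_adj v Huw) _; apply: IH.
Qed.

Lemma column_walk m i a :
  walk (@PK_adj n) m (i, a) (i + m, a) /\ walk (@PK_adj n) m (i + m, a) (i, a).
Proof.
elim: m i => [|m IH] i /=; first by rewrite addn0.
have [Hup Hdown] := IH i.+1; rewrite -addSnnS; split.
  by exists (i.+1, a); split => //; right; split => //; left.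
have Hstep : walk (@PK_adj n) 1 (i.+1, a) (i, a).
  by exists (i, a); split => //; right; split => //; right.
by have := walk_cat Hdown Hstep; rewrite addn1.
Qed.

Lemma column_walk_between i j a :
  walk (@PK_adj n) ((i - j) + (j - i)) (i, a) (j, a).
Proof.
case: (leqP i j) => Hij.
  have [Hup _] := column_walk (j - i) i a.
  by rewrite (subnKC Hij) in Hup; rewrite (eqP Hij) add0n.
have [_ Hdown] := column_walk (i - j) j a.
by rewrite (subnKC (ltnW Hij)) in Hdown; rewrite (eqP (ltnW Hij)) addn0.
Qed.

Lemma pk_dist_walk u v : walk (@PK_adj n) (pk_dist u v) u v.
Proof.
case: u v => [i a] [j b]; rewrite /pk_dist /=.
have Hjump : walk (@PK_adj n) (a != b) (j, a) (j, b).
  case: eqVneq => [->|Hab] //=; exists (j, b); split => //; left; split => //.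
  by move=> /= E; rewrite E eqxx in Hab.
exact: walk_cat (column_walk_between i j a) Hjump.
Qed.

Lemma dist_PK u v : dist (@PK_adj n) u v = Some (pk_dist u v).
Proof. by apply: dist_eq; [apply: pk_dist_walk | move=> k; apply: pk_dist_le_walk]. Qed.

Lemma dist_to_row0 k d b : dist (@PK_adj n) (k, d) (0, b) = Some (k + (d != b)).
Proof. by rewrite dist_PK /pk_dist /= subn0 sub0n addn0. Qed.

Definition columns (T : seq (nat * 'I_n)) : seq 'I_n := [seq x.2 | x <- T].

(* Of two distinct vertices (0,a), (0,c), one can only be told apart by a
   vertex in column a or column c: so a resolving set meets one of them. *)
Lemma resolving_meets_column (T : seq (nat * 'I_n)) a c :
  resolving (@PK_adj n) T -> a != c -> (a \in columns T) || (c \in columns T).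
Proof.
move=> HT Hac; apply/negPn/negP; rewrite negb_or => /andP[Ha Hc].
have Hne : ((0, a) : nat * 'I_n) <> (0, c) by case=> E; rewrite E eqxx in Hac.
have [[k b] Hx Hres] := HT _ _ Hne; apply: Hres.
have Hb : b \in columns T by apply: (map_f (fun x : nat * 'I_n => x.2) Hx).
rewrite !dist_PK /pk_dist /=.
by rewrite (memPnC Ha _ Hb) (memPnC Hc _ Hb).
Qed.

(* Lower bound: a resolving set misses at most one of the n columns. *)
Lemma resolving_size_lb (T : seq (nat * 'I_n)) :
  resolving (@PK_adj n) T -> n - 1 <= size T.
Proof.
move=> HT; set C := columns T.
have Hmiss : #|[predC C]| <= 1.
  rewrite leqNgt; apply/card_gt1P => -[a [c [Ha Hc Hac]]].
  by move: (resolving_meets_column HT Hac); rewrite !inE in Ha Hc; rewrite (negbTE Ha) (negbTE Hc).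
have Hsplit : #|C| + #|[predC C]| = n by rewrite cardC card_ord.
have HC : #|C| <= size T by rewrite -(size_map (fun x : nat * 'I_n => x.2)); apply: card_size.
by apply: leq_trans HC; rewrite -{1}Hsplit leq_subLR addnC leq_add2r.
Qed.

End PathTimesComplete.

Lemma mem_basisS n (b : 'I_n) : b < n - 1 -> (0, b) \in basisS n.
Proof. by move=> H; apply: map_f; rewrite mem_filter mem_enum H. Qed.

Lemma uniq_basisS n : uniq (basisS n).
Proof.
rewrite map_inj_uniq; last by move=> x y [].
by apply: filter_uniq; apply: enum_uniq.
Qed.

Lemma size_basisS n : size (basisS n) = n - 1.
Proof.
rewrite /basisS size_map -(size_map (@nat_of_ord n)).
rewrite -(filter_map (@nat_of_ord n) (fun k => k < n - 1)) val_enum_ord.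
by rewrite (@filter_iota_ltn 0 n (n - 1) (leq_subr 1 n)) size_iota.
Qed.

Lemma avoid_two (x y : nat) : exists2 k, k < 3 & (k != x) && (k != y).
Proof.
have [|H0] := boolP ((0 != x) && (0 != y)); first by exists 0.
have [|H1] := boolP ((1 != x) && (1 != y)); first by exists 1.
by exists 2 => //; lia.
Qed.

(* Two vertices of the same row: if a is a landmark column, (0,a) sees (i,a)
   at distance i and (i,c) at distance i + 1. *)
Lemma basisS_resolves_row n i (a c : 'I_n) :
  a != c -> a < n - 1 -> resolves (@PK_adj n) (0, a) (i, a) (i, c).
Proof.
move=> Hac Ha; rewrite /resolves !dist_to_row0 eqxx eq_sym Hac.
by case; lia.
Qed.

(* Two vertices in different rows: a landmark in a third column sees them at
   distances i + 1 and j + 1. *)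
Lemma basisS_resolves_rows n i j (a c b : 'I_n) :
  i != j -> b != a -> b != c -> resolves (@PK_adj n) (0, b) (i, a) (j, c).
Proof.
move=> Hij Hba Hbc; rewrite /resolves !dist_to_row0 eq_sym Hba eq_sym Hbc.
by case; lia.
Qed.

Lemma resolving_basisS n : 4 <= n -> resolving (@PK_adj n) (basisS n).
Proof.
move=> hn [i a] [j c] Huv.
have [Eij|Nij] := eqVneq i j.
  subst j; have Hac : a != c by apply/eqP => E; apply: Huv; rewrite E.
  have [Ha|Ha] := ltnP a (n - 1).
    by exists (0, a); [apply: mem_basisS | apply: basisS_resolves_row].
  have Hc : c < n - 1.
    by move: Hac (ltn_ord a) (ltn_ord c) Ha; rewrite -val_eqE /=; lia.
  exists (0, c); first exact: mem_basisS.
  by apply: resolves_sym; apply: basisS_resolves_row; rewrite // eq_sym.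
have [k Hk3 /andP[Hka Hkc]] := avoid_two a c.
have Hkn : k < n by lia.
exists (0, Ordinal Hkn); first by apply: mem_basisS => /=; lia.
by apply: basisS_resolves_rows; rewrite // -val_eqE.
Qed.

Theorem proposition8 (n : nat) (hn : 4 <= n) :
  metric_dim_is (@PK_adj n) (n - 1) /\ metric_basis (@PK_adj n) (basisS n).
Proof.
apply: metric_basis_of_min.
- exact: uniq_basisS.
- exact: resolving_basisS.
- exact: size_basisS.
- by move=> T _; apply: resolving_size_lb.
Qed.
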